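(* Let $P=\{x\in\mathbb{R}^n: Ax\le b,\ 0\le x_i\le u_i \text{ for } i\in I\}$ be a rational polyhedron with $I=\{1,\dots,l\}$ and positive integers $u_i$. If $\mathcal{B}$ and $\mathcal{C}$ are two binarization schemes each defined by unimodular binarization polytopes, then \[\operatorname{proj}_x\big(\mathrm{SC}(P_{\mathcal{B}},I_{\mathcal{B}})\big)=\operatorname{proj}_x\big(\mathrm{SC}(P_{\mathcal{C}},I_{\mathcal{C}})\big).\]
   Context: For positive integers $q,u$, $\Gamma^q_u$ is the set of rational polytopes $B\subseteq\{(x,z)\in\mathbb{R}\times[0,1]^q:0\le x\le u\}$ with $\operatorname{proj}_x(B\cap(\mathbb{R}\times\{0,1\}^q))=\{0,1,\dots,u\}$. $B$ is perfect if for each $x\in\{0,\dots,u\}$ there is a unique $z\in\{0,1\}^q$ with $(x,z)\in B$, and $B=\mathrm{conv}(B\cap(\mathbb{R}\times\{0,1\}^q))$. A perfect $B\in\Gamma^u_u$, $B=\mathrm{conv}\{(j,w^j):j=0,\dots,u\}$ with $w^j\in\{0,1\}^u$, is unimodular if the matrix with columns $w^j-w^0$ ($j=1,\dots,u$) is integral with determinant $\pm1$. A binarization scheme defined by unimodular binarization polytopes is $\mathcal{B}=(B^1,\dots,B^l)$ with each $B^i\in\Gamma^{u_i}_{u_i}$ unimodular; with $q=\sum_iq_i$ ($q_i$ the number of new variables of $B^i$), $P_{\mathcal{B}}=\{(x,z)\in\mathbb{R}^n\times\mathbb{R}^q: x\in P,\ (x_i,z_i)\in B^i\text{ for } i\in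 I\}$, $z=(z_1,\dots,z_l)$, $z_i\in\mathbb{R}^{q_i}$, and $I_{\mathcal{B}}=\{1,\dots,l,n+1,\dots,n+q\}$. Split closure: for $J\subseteq\{1,\dots,N\}$ and $X\subseteq\mathbb{R}^N$, $\mathrm{SC}(X,J)=\bigcap\mathrm{conv}(X\setminus S)$ over all $S=\{y:\pi_0<\pi^Ty<\pi_0+1\}$ with $\pi\in\mathbb{Z}^N$, $\pi_j=0$ for $j\notin J$, $\pi_0\in\mathbb{Z}$. *)

From HB Require Import structures.
From mathcomp Require Import all_boot all_order all_algebra.
From mathcomp Require Import reals.
Set Implicit Arguments. Unset Strict Implicit. Unset Printing Implicit Defensive.
Import Order.TTheory GRing.Theory Num.Theory.
Local Open Scope ring_scope.

Section Defs.
Variable R : realType.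

Definition set_eq (T : Type) (X Y : T -> Prop) := forall y, X y <-> Y y.

(* the m-th coordinate (0-based) of a row vector, 0 if out of range *)
Definition coordnat N (v : 'rV[R]_N) (k : nat) : R :=
  if insub k is Some i then v 0 i else 0.

Definition conv N (X : 'rV[R]_N -> Prop) (y : 'rV[R]_N) : Prop :=
  exists (k : nat) (w : 'I_k -> R) (p : 'I_k -> 'rV[R]_N),
    (forall i, 0 <= w i) /\ \sum_(i < k) w i = 1 /\
    (forall i, X (p i)) /\ y = \sum_(i < k) w i *: p i.

Definition split_set N (pi : 'I_N -> int) (pi0 : int) (y : 'rV[R]_N) : Prop :=
  pi0%:~R < \sum_(j < N) (pi j)%:~R * y 0 j < pi0%:~R + 1.

Definition SC N (X : 'rV[R]_N -> Prop) (J : pred 'I_N) (y : 'rV[R]_N) : Prop :=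
  forall (pi : 'I_N -> int) (pi0 : int),
    (forall j, ~~ J j -> pi j = 0) ->
    conv (fun v => X v /\ ~ split_set pi pi0 v) y.

Definition proj_x n q (Y : 'rV[R]_(n + q) -> Prop) (x : 'rV[R]_n) : Prop :=
  exists z : 'rV[R]_q, Y (row_mx x z).

Definition binary q (z : 'rV[R]_q) : Prop := forall k, z 0 k = 0 \/ z 0 k = 1.

Definition rational_polytope N (B : 'rV[R]_N -> Prop) : Prop :=
  exists (k : nat) (p : 'I_k -> 'rV[rat]_N),
    set_eq B (conv (fun y => exists i, y = map_mx ratr (p i))).

Definition pt q (x : R) (z : 'rV[R]_q) : 'rV[R]_(1 + q) := row_mx x%:M z.

Definition in_Gamma (q u : nat) (B : 'rV[R]_(1 + q) -> Prop) : Prop :=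
  rational_polytope B /\
  (forall y, B y -> 0 <= lsubmx y 0 0 <= u%:R /\
                    forall k, 0 <= rsubmx y 0 k <= 1) /\
  (forall x : R, (exists z : 'rV[R]_q, binary z /\ B (pt x z)) <->
                 exists j : nat, (j <= u)%N /\ x = j%:R).

Definition perfect (q u : nat) (B : 'rV[R]_(1 + q) -> Prop) : Prop :=
  (forall j : nat, (j <= u)%N ->
     exists! z : 'rV[R]_q, binary z /\ B (pt j%:R z)) /\
  set_eq B (conv (fun y => B y /\ binary (rsubmx y))).

Definition unimodular (u : nat) (B : 'rV[R]_(1 + u) -> Prop) : Prop :=
  @in_Gamma u u B /\ @perfect u u B /\
  exists w : 'I_u.+1 -> 'rV[R]_u,
    (forall j, binary (w j)) /\
    set_eq B (conv (fun y => exists j : 'I_u.+1, y = pt (nat_of_ord j)%:R (w j))) /\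
    (let M := \matrix_(r < u, c < u) (w (lift ord0 c) 0 r - w ord0 0 r) in
     \det M = 1 \/ \det M = -1).

(* P = {x : A x <= b, 0 <= x_i <= u_i for i < l} (0-based indices) *)
Definition polyP m n l (A : 'M[rat]_(m, n)) (b : 'cV[rat]_m) (u : 'I_l -> nat)
  (x : 'rV[R]_n) : Prop :=
  (forall r : 'I_m, \sum_(j < n) ratr (A r j) * x 0 j <= ratr (b r 0)) /\
  (forall i : 'I_l, 0 <= coordnat x i <= (u i)%:R).

(* offset of block z_i inside z = (z_1, ..., z_l) *)
Definition offset l (u : 'I_l -> nat) (i : 'I_l) : nat :=
  (\sum_(k < l | (k < i)%N) u k)%N.

Definition block n l (u : 'I_l -> nat) (y : 'rV[R]_(n + \sum_(k < l) u k)) (i : 'I_l)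
  : 'rV[R]_(1 + u i) :=
  pt (coordnat (lsubmx y) i)
     (\row_(k < u i) coordnat (rsubmx y) (offset u i + k)).

(* P_B for a scheme B = (B^1, ..., B^l) with q_i = u_i *)
Definition PB m n l (A : 'M[rat]_(m, n)) (b : 'cV[rat]_m) (u : 'I_l -> nat)
  (Bs : forall i : 'I_l, 'rV[R]_(1 + u i) -> Prop)
  (y : 'rV[R]_(n + \sum_(k < l) u k)) : Prop :=
  polyP A b u (lsubmx y) /\ forall i : 'I_l, Bs i (block y i).

(* I_B = {1..l, n+1..n+q}, 0-based *)
Definition IB n l q : pred 'I_(n + q) := fun j => ((j < l)%N || (n <= j)%N).

End Defs.

From HB Require Import structures.
From mathcomp Require Import all_boot all_order all_algebra.
From mathcomp Require Import reals lra.
Import Order.TTheory GRing.Theory Num.Theory.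
Set Implicit Arguments. Unset Strict Implicit. Unset Printing Implicit Defensive.
Local Open Scope ring_scope.

(* Two unimodular binarization polytopes of the same variable are images of each
   other under integral affine maps of the binary variables: if w^j, v^j are
   their vertices and W, V the integral matrices with rows w^j - w^0, v^j - v^0,
   then z |-> z W^-1 V + (v^0 - w^0 W^-1 V) sends w^j to v^j, and W^-1 V is
   integral because det W = +-1.  Acting blockwise on z and as the identity on x,
   these give an integral affine map of (x, z)-space carrying P_B into P_C and
   fixing every coordinate outside I_B.  Such a map pulls each split set allowed
   for I_B back to another allowed split set, so it maps SC(P_B, I_B) into
   SC(P_C, I_C) without changing x; by symmetry the projections agree. *)

Section SplitClosure.
Variable R : realType.
Local Notation intmx := (map_mx (intr : int -> R)).

Lemma conv_affine N (X Y : 'rV[R]_N -> Prop) (F : 'M[R]_N) (c : 'rV[R]_N) y :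
  (forall v, X v -> Y (v *m F + c)) -> conv X y -> conv Y (y *m F + c).
Proof.
move=> XY [k [w [p [w_ge0 [w_sum1 [Xp ->]]]]]].
exists k, w, (fun i => p i *m F + c); do 2!split => //.
split; first by move=> i; apply: XY.
under [RHS]eq_bigr do rewrite scalerDr.
rewrite big_split /= -scaler_suml w_sum1 scale1r mulmx_suml; congr (_ + _).
by apply: eq_bigr => i _; rewrite scalemxAl.
Qed.

Lemma conv_mono N (X Y : 'rV[R]_N -> Prop) y :
  (forall v, X v -> Y v) -> conv X y -> conv Y y.
Proof.
move=> XY [k [w [p [w_ge0 [w_sum1 [Xp ->]]]]]].
by exists k, w, p; do 3!split => //; move=> i; apply: XY.
Qed.

Lemma sum_intr_mul_row N (f : 'I_N -> int) (y : 'rV[R]_N) :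
  \sum_(j < N) (f j)%:~R * y 0 j = (y *m intmx (\col_j f j)) 0 0.
Proof. by rewrite mxE; apply: eq_bigr => j _; rewrite !mxE mulrC. Qed.

Lemma split_set_affine N (pi : 'I_N -> int) (pi0 : int) (F : 'M[int]_N)
    (c : 'rV[int]_N) v :
  let p := \col_j pi j in
  split_set pi pi0 (v *m intmx F + intmx c) <->
  split_set (fun j => (F *m p) j 0) (pi0 - (c *m p) 0 0) v.
Proof.
move=> p; rewrite /split_set !sum_intr_mul_row.
have -> : \col_j (F *m p) j 0 = F *m p by apply/matrixP => j k; rewrite mxE ord1.
rewrite mulmxDl -mulmxA -!map_mxM mxE [X in _ + X]mxE intrB.
by split=> /andP [lo hi]; apply/andP; split; lra.
Qed.

Lemma SC_affine N (X Y : 'rV[R]_N -> Prop) (J : pred 'I_N) (F : 'M[int]_N)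
    (c : 'rV[int]_N) y :
  (forall j k, ~~ J j -> F j k = (j == k)%:R) ->
  (forall v, X v -> Y (v *m intmx F + intmx c)) ->
  SC X J y -> SC Y J (y *m intmx F + intmx c).
Proof.
move=> F_id XY SCy pi pi0 pi_J.
have FpJ j : ~~ J j -> (F *m \col_k pi k) j 0 = 0.
  move=> Jj; rewrite mxE (bigD1 j) //= big1 ?addr0 => [|k kj].
    by rewrite F_id // eqxx mul1r mxE pi_J.
  by rewrite F_id // eq_sym (negbTE kj) mul0r.
apply: conv_affine (SCy _ (pi0 - (c *m \col_k pi k) 0 0) FpJ) => v [Xv v_out].
by split; [exact: XY | move/split_set_affine].
Qed.

End SplitClosure.

Section BlockwiseMatrix.
Variables (K : pzRingType) (l N : nat) (d : 'I_l -> nat).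
Variable S : forall i : 'I_l, 'M[K]_(N, d i).
Hypothesis tr_S_mulK : forall i, (S i)^T *m S i = 1%:M.
Hypothesis tr_S_mul_neq : forall i j, i != j -> (S j)^T *m S i = 0.
Variables (M : forall i, 'M[K]_(d i)) (t : forall i, 'rV[K]_(d i)).

Definition blockwise_mx : 'M[K]_N := 1%:M + \sum_i S i *m (M i - 1%:M) *m (S i)^T.
Definition blockwise_row : 'rV[K]_N := \sum_i t i *m (S i)^T.

Lemma blockwise_mx_mul i : blockwise_mx *m S i = S i *m M i.
Proof.
rewrite mulmxDl mul1mx mulmx_suml (bigD1 i) //= big1 ?addr0.
  by rewrite -mulmxA tr_S_mulK mulmx1 mulmxBr mulmx1 addrC subrK.
by move=> j ji; rewrite -mulmxA tr_S_mul_neq ?mulmx0 // eq_sym.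
Qed.

Lemma blockwise_row_mul i : blockwise_row *m S i = t i.
Proof.
rewrite mulmx_suml (bigD1 i) //= big1 ?addr0.
  by rewrite -mulmxA tr_S_mulK mulmx1.
by move=> j ji; rewrite -mulmxA tr_S_mul_neq ?mulmx0 // eq_sym.
Qed.

End BlockwiseMatrix.

Lemma block_mx1_ulE (K : pzRingType) n q (G : 'M[K]_q) (j k : 'I_(n + q)) :
  (j < n)%N -> block_mx 1%:M 0 0 G j k = (j == k)%:R.
Proof.
move=> jn; have -> : j = lshift q (Ordinal jn) by apply: val_inj.
rewrite -[k]splitK; case: (split k) => k' /=.
  by rewrite block_mxEul mxE (inj_eq (@lshift_inj _ _)).
by rewrite block_mxEur mxE eq_lrshift.
Qed.

Section BlockPositions.
Variables (l : nat) (u : 'I_l -> nat).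
Local Notation q := (\sum_(k < l) u k)%N.

Lemma offset_addE i : (offset u i + u i = \sum_(k < l | (k <= i)%N) u k)%N.
Proof.
rewrite [RHS](bigD1 i) //= addnC; congr (_ + _)%N.
by apply: eq_bigl => k; rewrite ltn_neqAle andbC.
Qed.

Lemma offset_add_le_offset (i j : 'I_l) :
  (i < j)%N -> (offset u i + u i <= offset u j)%N.
Proof.
move=> ij; rewrite offset_addE; apply: sub_le_big => [//|m n|k ki].
  exact: leq_addr.
exact: leq_ltn_trans ki ij.
Qed.

Lemma offset_add_le_sum i : (offset u i + u i <= q)%N.
Proof. by rewrite offset_addE; apply: sub_le_big => // m n; exact: leq_addr. Qed.

Lemma offset_add_ltn i (a : 'I_(u i)) : (offset u i + a < q)%N.
Proof. by apply: leq_trans (offset_add_le_sum i); rewrite ltn_add2l. Qed.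

Definition block_pos i (a : 'I_(u i)) : 'I_q := Ordinal (offset_add_ltn a).

Lemma block_pos_inj i : injective (@block_pos i).
Proof. by move=> a b /(congr1 val) /addnI /val_inj. Qed.

Lemma block_pos_neq i j (a : 'I_(u i)) (b : 'I_(u j)) :
  i != j -> block_pos a != block_pos b.
Proof.
move=> ij; have sep k m (x : 'I_(u k)) (y : 'I_(u m)) :
    (k < m)%N -> (offset u k + x < offset u m + y)%N.
  move=> km; apply: (@leq_trans (offset u m)); last exact: leq_addr.
  by apply: leq_trans (offset_add_le_offset km); rewrite ltn_add2l.
rewrite -val_eqE /= neq_ltn; case: (ltngtP i j) => [/sep->|/sep->|/val_inj eij] //.
  exact: orbT.
by rewrite eij eqxx in ij.
Qed.

Definition sel_mx i : 'M[int]_(q, u i) := colsub (@block_pos i) 1%:M.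

Lemma tr_sel_mx_mulK i : (sel_mx i)^T *m sel_mx i = 1%:M.
Proof.
rewrite trmx_mxsub trmx1 -mxsub_mul mul1mx; apply/matrixP=> a b.
by rewrite !mxE (inj_eq (@block_pos_inj i)).
Qed.

Lemma tr_sel_mx_mul_neq i j : i != j -> (sel_mx j)^T *m sel_mx i = 0.
Proof.
move=> ij; rewrite trmx_mxsub trmx1 -mxsub_mul mul1mx; apply/matrixP=> a b.
by rewrite !mxE eq_sym (negbTE (block_pos_neq b a ij)).
Qed.

End BlockPositions.

Section Binarization.
Variable R : realType.
Local Notation intmx := (map_mx (intr : int -> R)).

Lemma binary_intr q (z : 'rV[R]_q) : binary z -> exists zi : 'rV[int]_q, z = intmx zi.
Proof.
move=> zb; exists (\row_k (z 0 k == 1)%:R); apply/rowP => k; rewrite !mxE.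
by case: (zb k) => ->; rewrite ?eqxx // eq_sym oner_eq0.
Qed.

Lemma unimodular_int_vertices u (B : 'rV[R]_(1 + u) -> Prop) :
  unimodular B ->
  exists w : 'I_u.+1 -> 'rV[int]_u,
    set_eq B (conv (fun y => exists j : 'I_u.+1, y = pt (j : nat)%:R (intmx (w j)))) /\
    \matrix_(c < u) (w (lift ord0 c) - w ord0) \in unitmx.
Proof.
move=> [_ [_ [w [wb [Bw det_w]]]]].
have /fin_all_exists [wi wE] j := binary_intr (wb j).
exists wi; split=> [y|].
  by rewrite Bw; split; apply: conv_mono => _ [j ->]; exists j; rewrite wE.
set W := \matrix_c _; set M := \matrix_(r, c) _ in det_w.
have M_W : M = (intmx W)^T by apply/matrixP => r c; rewrite !mxE !wE !mxE intrB.
move: det_w; rewrite /= M_W det_tr det_map_mx unitmxE => -[] detW.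
  by have -> : \det W = 1 by apply: (@intr_inj R).
by have -> : \det W = -1 by apply: (@intr_inj R); rewrite detW intrN.
Qed.

Lemma row_mx_mul_block_diag n q (a : 'rV[R]_n) (z : 'rV[R]_q) (M : 'M[R]_q)
    (t : 'rV[R]_q) :
  row_mx a z *m block_mx 1%:M 0 0 M + row_mx 0 t = row_mx a (z *m M + t).
Proof. by rewrite mul_row_block !mulmx0 mulmx1 add_row_mx !addr0 add0r. Qed.

Lemma coordnat_ord N (v : 'rV[R]_N) (k : 'I_N) : coordnat v k = v 0 k.
Proof. by rewrite /coordnat valK. Qed.

Lemma mul_sel_mx l (u : 'I_l -> nat) (z : 'rV[R]_(\sum_(k < l) u k)) i :
  z *m intmx (sel_mx u i) = \row_a coordnat z (offset u i + a).
Proof.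
apply/rowP => a; rewrite map_mxsub map_mx1 mulmx_colsub mulmx1 !mxE.
by rewrite -[X in _ = coordnat _ X]/(nat_of_ord (block_pos a)) coordnat_ord.
Qed.

Lemma unimodular_affine_map u (B C : 'rV[R]_(1 + u) -> Prop) :
  unimodular B -> unimodular C ->
  exists Mt : 'M[int]_u * 'rV[int]_u, forall x z,
    B (pt x z) -> C (pt x (z *m intmx Mt.1 + intmx Mt.2)).
Proof.
move=> /unimodular_int_vertices [w [Bw W_unit]] /unimodular_int_vertices [v [Cv _]].
set W := \matrix_c _ in W_unit; pose V := \matrix_(c < u) (v (lift ord0 c) - v ord0).
pose M := invmx W *m V; pose t := v ord0 - w ord0 *m M.
have w_v j : w j *m M + t = v j.
  rewrite addrCA -mulmxBl; case: (unliftP ord0 j) => [c ->|->]; last first.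
    by rewrite subrr mul0mx addr0.
  have -> : w (lift ord0 c) - w ord0 = row c W by apply/rowP => r; rewrite !mxE.
  by rewrite -row_mul mulKVmx // rowK addrC subrK.
exists (M, t) => x z /Bw Bxz; apply/Cv.
rewrite /pt -row_mx_mul_block_diag; apply: conv_affine Bxz => _ [j ->].
by exists j; rewrite /pt row_mx_mul_block_diag -map_mxM -map_mxD w_v.
Qed.

Lemma proj_SC_PB_sub m n l (A : 'M[rat]_(m, n)) (b : 'cV[rat]_m) (u : 'I_l -> nat)
    (Bs Cs : forall i : 'I_l, 'rV[R]_(1 + u i) -> Prop) x :
  (forall i, unimodular (Bs i)) -> (forall i, unimodular (Cs i)) ->
  proj_x (SC (PB A b Bs) (@IB n l (\sum_(k < l) u k))) x ->
  proj_x (SC (PB A b Cs) (@IB n l (\sum_(k < l) u k))) x.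
Proof.
move=> hB hC [z SCxz].
have /fin_all_exists [Mt BC] i := unimodular_affine_map (hB i) (hC i).
pose G := blockwise_mx (sel_mx u) (fun i => (Mt i).1).
pose g := blockwise_row (sel_mx u) (fun i => (Mt i).2).
have FE y : y *m intmx (block_mx 1%:M 0 0 G) + intmx (row_mx 0 g) =
            row_mx (lsubmx y) (rsubmx y *m intmx G + intmx g).
  rewrite map_block_mx map_row_mx map_mx1 !map_mx0.
  by rewrite -{1}(hsubmxK y) row_mx_mul_block_diag.
exists (z *m intmx G + intmx g).
have := SC_affine (F := block_mx 1%:M 0 0 G) (c := row_mx 0 g) _ _ SCxz.
rewrite FE row_mxKl row_mxKr; apply.
  by move=> j k /norP [_]; rewrite -ltnNge; apply: block_mx1_ulE.
move=> v [Pv Bv]; rewrite FE; split=> [|i]; first by rewrite row_mxKl.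
rewrite /block row_mxKl row_mxKr -mul_sel_mx mulmxDl -mulmxA -!map_mxM.
have [selK sel0] := (tr_sel_mx_mulK u, @tr_sel_mx_mul_neq _ u).
rewrite (blockwise_mx_mul selK sel0) (blockwise_row_mul selK sel0).
by rewrite map_mxM mulmxA mul_sel_mx; apply: BC.
Qed.

End Binarization.

Unset Implicit Arguments.

Theorem corollary2 (R : realType) (m n l : nat)
  (A : 'M[rat]_(m, n)) (b : 'cV[rat]_m) (u : 'I_l -> nat)
  (hl0 : (0 < l)%N) (hln : (l <= n)%N) (hu : forall i, (0 < u i)%N)
  (Bs Cs : forall i : 'I_l, 'rV[R]_(1 + u i) -> Prop)
  (hB : forall i, unimodular (Bs i)) (hC : forall i, unimodular (Cs i)) :
  set_eq
    (proj_x (SC (PB A b Bs) (@IB n l (\sum_(k < l) u k))))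
    (proj_x (SC (PB A b Cs) (@IB n l (\sum_(k < l) u k)))).
Proof. by move=> x; split; apply: proj_SC_PB_sub. Qed.
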